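(* Let $q\ge 3$ and let $n$ be a positive even integer. There exists a quasi-complementary Lee metric Gray code of $q$-ary $n$-tuples.
   Context: Lee distance between $v,u\in\mathbb{Z}_q^n$ is $\sum_{i}\min\{|v_i-u_i|,q-|v_i-u_i|\}$ (entries regarded as integers in $\{0,\ldots,q-1\}$). A quasi-complementary Lee metric Gray code of $q$-ary $n$-tuples is an ordering $G(0),\ldots,G(q^n-1)$ of all words of $\mathbb{Z}_q^n$ such that consecutive words $G(i),G(i+1)$ ($0\le i<q^n-1$) have Lee distance $1$ and $G((i+q^{n-1})\bmod q^n)=G(i)+(1,1,\ldots,1)$ for all $i$, with addition in $\mathbb{Z}_q^n$. *)

From mathcomp Require Import all_boot.
Set Implicit Arguments. Unset Strict Implicit. Unset Printing Implicit Defensive.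

Definition word (q n : nat) := {ffun 'I_n -> 'I_q}.

Definition lee1 (q a b : nat) : nat :=
  let d := if a <= b then b - a else a - b in minn d (q - d).

Definition lee_dist (q n : nat) (v u : word q n) : nat :=
  \sum_(i < n) lee1 q (v i) (u i).

Definition is_plus_ones (q n : nat) (v u : word q n) : Prop :=
  forall j : 'I_n, nat_of_ord (u j) = (nat_of_ord (v j) + 1) %% q.

Definition quasi_compl_lee_gray (q n : nat) (G : nat -> word q n) : Prop :=
  [/\ (forall v : word q n, exists2 i, i < q ^ n & G i = v),
      {in [pred i | i < q ^ n] &, injective G},
      (forall i, i.+1 < q ^ n -> lee_dist (G i) (G i.+1) = 1) &
      (forall i, i < q ^ n -> is_plus_ones (G i) (G ((i + q ^ n.-1) %% q ^ n)))].

From mathcomp Require Import all_boot zify.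
Set Implicit Arguments. Unset Strict Implicit. Unset Printing Implicit Defensive.

(* Split Z_q^n as Z_q^m x Z_q with m = n - 1 odd.  Let P be a Lee Gray path
   through Z_q^m whose last word is its first word plus (1,...,1).  Listing the
   words (P_r, 0) + t(1,...,1) for t = 0, ..., q - 1 and, within each t, for
   r = 0, ..., q^m - 1, gives the code: consecutive translates are joined since
   P_last + t = P_0 + (t + 1), and moving the index by q^m adds (1,...,1).
   Such a path P exists for every odd m.  For m = 1 take 0, q - 1, ..., 1.
   From a path P for m, replace each word P_j by a block of words (P_j, c),
   where c runs through the torus Z_q^2 along a fixed Hamiltonian cycle C with
   one edge removed: block j goes from C(s_j) to the neighbouring cell
   C(s_(j+1)), so that consecutive blocks are joined.  The start positions are
   s_j = 0, 1, ..., q, then alternately q - 1 and q; since q^m - q is even, the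
   last block ends at C(q) = (1,1), and the new path ends at its first word
   (P_0, (0,0)) plus (1,...,1). *)

Section SeqFacts.
Variables (T : Type) (x0 : T).

Lemma head_rot n s : n < size s -> head x0 (rot n s) = nth x0 s n.
Proof. by move=> lt_ns; rewrite -nth0 nth_cat size_drop subn_gt0 lt_ns nth_drop addn0. Qed.

Lemma last_rot n s : 0 < n <= size s -> last x0 (rot n s) = nth x0 s n.-1.
Proof. by case: n => // n le_ns; rewrite last_cat (take_nth x0 le_ns) last_rcons. Qed.

Lemma head_rev s : head x0 (rev s) = last x0 s.
Proof. by case/lastP: s => // s x; rewrite rev_rcons last_rcons. Qed.

Lemma last_rev s : last x0 (rev s) = head x0 s.
Proof. by case: s => //= x s; rewrite rev_cons last_rcons. Qed.

Variable e : rel T.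

Lemma sorted_mkseq f n : (forall i, i.+1 < n -> e (f i) (f i.+1)) -> sorted e (mkseq f n).
Proof.
move=> ef; apply/(sortedP x0) => i; rewrite size_mkseq => lt_in.
by rewrite !nth_mkseq ?ef // ltnW.
Qed.

Lemma cycle_mkseq f n : 0 < n ->
  (forall i, i.+1 < n -> e (f i) (f i.+1)) -> e (f n.-1) (f 0) -> cycle e (mkseq f n).
Proof.
case: n => // n _ ef wrap; rewrite (cycle_path x0) -nth_last size_mkseq nth_mkseq //.
by have := sorted_mkseq ef; rewrite /mkseq /= wrap.
Qed.

Lemma sorted_cat s t : ~~ nilp s -> ~~ nilp t ->
  sorted e (s ++ t) = [&& sorted e s, e (last x0 s) (head x0 t) & sorted e t].
Proof. by case: s => // x s _; case: t => // y t _; rewrite /= cat_path /= andbA. Qed.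

Lemma sorted_flatten ss :
  all (fun s => ~~ nilp s && sorted e s) ss ->
  sorted (fun s t => e (last x0 s) (head x0 t)) ss -> sorted e (flatten ss).
Proof.
elim: ss => [|s [|t ss] IH] //=; first by rewrite cats0 => /andP[/andP[]].
case/andP=> /andP[s_nil s_sorted] t_ss /andP[st t_path].
case: t st t_ss t_path IH => [|y t] st; first by case/andP=> /andP[].
by move=> t_ss t_path IH; rewrite sorted_cat ?s_sorted ?IH //= st.
Qed.

End SeqFacts.

Section LeeGray.
Variable q : nat.
Hypothesis q_gt1 : 1 < q.
Let q_gt0 : 0 < q := ltnW q_gt1.

Definition shift t a := (a + t) %% q.

Lemma shift_lt t a : shift t a < q.
Proof. exact: ltn_pmod. Qed.

Lemma shiftD s t a : shift s (shift t a) = shift (t + s) a.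
Proof. by rewrite /shift modnDml addnA. Qed.

Lemma shift_modl t a : shift (t %% q) a = shift t a.
Proof. exact: modnDmr. Qed.

Lemma shiftK s t a : t + s = q -> a < q -> shift s (shift t a) = a.
Proof. by move=> ts_q a_lt; rewrite shiftD ts_q /shift modnDr modn_small. Qed.

Lemma shift_subK x y : x < q -> y < q -> shift (q - shift (q - y) x) x = y.
Proof.
rewrite /shift => x_lt y_lt; have [le_yx|lt_xy] := leqP y x.
- have -> : x + (q - y) = x - y + q by lia.
  rewrite modnDr (modn_small (_ : x - y < q)); last by lia.
  have -> : x + (q - (x - y)) = y + q by lia.
  by rewrite modnDr modn_small.
- rewrite (modn_small (_ : x + (q - y) < q)); last by lia.
  by rewrite (_ : x + (q - (x + (q - y))) = y) ?modn_small //; lia.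
Qed.

Definition cyc_adj a b := (b == shift 1 a) || (a == shift 1 b).

Lemma cyc_adjC a b : cyc_adj a b = cyc_adj b a.
Proof. by rewrite /cyc_adj orbC. Qed.

Lemma cyc_adj_shift t a b : cyc_adj a b -> cyc_adj (shift t a) (shift t b).
Proof.
by rewrite /cyc_adj !shiftD [t + 1]addnC -!shiftD => /orP[]/eqP->; rewrite eqxx ?orbT.
Qed.

Lemma lee1_shift1 a : a < q -> lee1 q a (shift 1 a) = 1.
Proof.
rewrite /lee1 /shift => a_lt; have [a1_lt|a1_eq] : a.+1 < q \/ a.+1 = q by lia.
- by rewrite modn_small addn1 // leqnSn /=; lia.
- by rewrite addn1 a1_eq modnn leqn0; case: eqP => /=; lia.
Qed.

Lemma lee1C a b : lee1 q a b = lee1 q b a.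
Proof. by rewrite /lee1; case: ltngtP => // ->; rewrite ?leqnn. Qed.

Lemma lee1_cyc_adj a b : a < q -> b < q -> cyc_adj a b -> lee1 q a b = 1.
Proof.
by move=> a_lt b_lt /orP[]/eqP->; rewrite ?lee1_shift1 // lee1C lee1_shift1.
Qed.

Fixpoint lee_adj (u v : seq nat) : bool :=
  match u, v with
  | a :: u', b :: v' => (a == b) && lee_adj u' v' || cyc_adj a b && (u' == v')
  | _, _ => false
  end.

Lemma lee_adjC u v : lee_adj u v = lee_adj v u.
Proof. by elim: u v => [|a u IH] [|b v] //=; rewrite eq_sym IH cyc_adjC [v == u]eq_sym. Qed.

Lemma lee_adj_cyc a b : lee_adj [:: a] [:: b] = cyc_adj a b.
Proof. by rewrite /= andbT andbF. Qed.

Lemma lee_adj_catl w u v : lee_adj u v -> lee_adj (w ++ u) (w ++ v).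
Proof. by elim: w => //= a w IH /IH ->; rewrite eqxx. Qed.

Lemma lee_adj_catr w u v : lee_adj u v -> lee_adj (u ++ w) (v ++ w).
Proof.
elim: u v => [|a u IH] [|b v] //= /orP[/andP[-> /IH ->] | /andP[-> /eqP ->]] //.
by rewrite eqxx orbT.
Qed.

Lemma lee_adj_shift t u v : lee_adj u v -> lee_adj (map (shift t) u) (map (shift t) v).
Proof.
elim: u v => [|a u IH] [|b v] //= /orP[/andP[/eqP -> /IH ->] | /andP[/cyc_adj_shift -> /eqP ->]].
  by rewrite eqxx.
by rewrite eqxx orbT.
Qed.

Lemma lee_adj_lee1 u v : all (fun a => a < q) u -> all (fun a => a < q) v ->
  lee_adj u v -> \sum_(j < size u) lee1 q (nth 0 u j) (nth 0 v j) = 1.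
Proof.
have lee1_refl a : lee1 q a a = 0 by rewrite /lee1 leqnn subnn min0n.
elim: u v => [|a u IH] [|b v] //= /andP[a_lt u_lt] /andP[b_lt v_lt].
rewrite big_ord_recl /=; case/orP=> [/andP[/eqP <- uv] | /andP[ab /eqP <-]].
- by rewrite lee1_refl IH.
- by rewrite lee1_cyc_adj // big1 // => j _; rewrite lee1_refl.
Qed.

Definition is_word m (w : seq nat) := (size w == m) && all (fun a => a < q) w.

Lemma is_word_cat m k u v :
  size u = m -> is_word (m + k) (u ++ v) = is_word m u && is_word k v.
Proof. by move=> su; rewrite /is_word size_cat all_cat su eqn_add2l eqxx andbCA. Qed.

Lemma map_shiftK s t x : t + s = q -> all (fun a => a < q) x ->
  map (shift s) (map (shift t) x) = x.
Proof. by move=> ts_q /allP x_lt; rewrite -map_comp map_id_in // => a /x_lt /(shiftK ts_q). Qed.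

(* Row k of this Hamiltonian cycle of the torus Z_q^2 is (k,k), (k,k-1), ...,
   (k,k+1); it is followed by row k+1, and cell q is (1,1). *)
Definition cell z := [:: z %/ q %% q; shift (q - z %% q) (z %/ q)].

Definition cell_index (w : seq nat) := nth 0 w 0 * q + shift (q - nth 0 w 1) (nth 0 w 0).

Definition torus := mkseq cell (q * q).

Lemma cellE k a : a < q -> cell (k * q + a) = [:: k %% q; shift (q - a) k].
Proof. by move=> a_lt; rewrite /cell divnMDl // divn_small // addn0 modnMDl (modn_small a_lt). Qed.

Lemma cell0 : cell 0 = [:: 0; 0].
Proof. by rewrite /cell div0n mod0n /shift subn0 modnn. Qed.

Lemma cell_q : cell q = [:: 1; 1].
Proof. by rewrite /cell divnn q_gt0 modnn subn0 /shift modnDr modn_small. Qed.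

Lemma cell_qq : cell (q * q) = cell 0.
Proof. by rewrite cell0 /cell mulnK // modnn modnMl /shift subn0 modnDl modnn. Qed.

Lemma cell_adj z : lee_adj (cell z) (cell z.+1).
Proof.
rewrite (divn_eq z q); set k := z %/ q; have a_lt : z %% q < q by exact: ltn_pmod.
have [a1_lt|a1_eq] : (z %% q).+1 < q \/ (z %% q).+1 = q by lia.
- rewrite -addnS !cellE //; apply: (lee_adj_catl [:: _]); rewrite lee_adj_cyc /cyc_adj.
  by rewrite !shiftD !addn1 subnSK // eqxx orbT.
- rewrite -addnS a1_eq -mulSnr -[k.+1 * q]addn0 !cellE // subn0.
  have -> : q - z %% q = 1 by lia.
  have -> : shift q k.+1 = shift 1 k by rewrite /shift modnDr addn1.
  apply: (@lee_adj_catr _ [:: _] [:: _]).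
  by rewrite lee_adj_cyc /cyc_adj /shift modnDml addn1 eqxx.
Qed.

Lemma cell_word z : is_word 2 (cell z).
Proof. by rewrite /is_word /= ltn_pmod // shift_lt. Qed.

Lemma cellK z : z < q * q -> cell_index (cell z) = z.
Proof.
move=> z_lt; have k_lt : z %/ q < q by rewrite ltn_divLR.
rewrite {2}(divn_eq z q) /cell_index /= (modn_small k_lt) shift_subK ?ltn_pmod //.
Qed.

Lemma cell_index_lt w : is_word 2 w -> cell_index w < q * q.
Proof.
case: w => [|x [|y []]] //; rewrite /is_word /cell_index /= andbT => /andP[x_lt _].
have := shift_lt (q - y) x; nia.
Qed.

Lemma cell_indexK w : is_word 2 w -> cell (cell_index w) = w.
Proof.
case: w => [|x [|y []]] //; rewrite /is_word /cell_index /= andbT => /andP[x_lt y_lt].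
by rewrite cellE ?shift_lt // modn_small // shift_subK.
Qed.

Lemma torus_cycle : cycle lee_adj torus.
Proof.
have qq_gt0 : 0 < q * q by rewrite muln_gt0 q_gt0.
apply: (cycle_mkseq [::]) => // [i _|]; first exact: cell_adj.
by rewrite -cell_qq -{2}(prednK qq_gt0) cell_adj.
Qed.

Lemma torus_uniq : uniq torus.
Proof. by apply/mkseq_uniqP/(can_in_inj (g := cell_index)) => z; apply: cellK. Qed.

Lemma mem_torus w : (w \in torus) = is_word 2 w.
Proof.
apply/mapP/idP => [[z _ ->] | w2]; first exact: cell_word.
by exists (cell_index w); rewrite ?cell_indexK // mem_iota cell_index_lt.
Qed.

Lemma sorted_rot_torus s : sorted lee_adj (rot s torus).
Proof. by have := torus_cycle; rewrite -(rot_cycle s) (cycle_path [::]) => /path_sorted. Qed.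

Definition arc s s' := if s' == s.+1 then rev (rot s' torus) else rot s torus.

Lemma arcP s s' : s < q * q -> s' < q * q -> s' = s.+1 \/ s = s'.+1 ->
  [/\ perm_eq (arc s s') torus, sorted lee_adj (arc s s'),
      head [::] (arc s s') = cell s & last [::] (arc s s') = cell s'].
Proof.
have size_torus : size torus = q * q by apply: size_mkseq.
have nth_torus i : i < q * q -> nth [::] torus i = cell i by apply: nth_mkseq.
rewrite /arc; case: eqP => [-> s_lt s1_lt _ | _ s_lt s'_lt [//|s_eq]]; last subst s; split.
- by rewrite perm_rev perm_rot perm_refl.
- rewrite rev_sorted (eq_sorted (e' := lee_adj)) ?sorted_rot_torus // => u v.
  exact: lee_adjC.
- by rewrite head_rev last_rot ?size_torus // nth_torus.
- by rewrite last_rev head_rot ?size_torus // nth_torus.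
- by rewrite perm_rot perm_refl.
- exact: sorted_rot_torus.
- by rewrite head_rot ?size_torus // nth_torus.
- by rewrite last_rot ?size_torus ?(ltnW s_lt) // nth_torus.
Qed.

Definition block_start j := if j < q then j else q - odd (j - q).

Lemma block_start_lt j : block_start j < q * q.
Proof.
apply: (@leq_ltn_trans q); last by rewrite ltn_Pmull.
by rewrite /block_start; case: ltnP => [/ltnW | _] //; apply: leq_subr.
Qed.

Lemma block_start_step j :
  block_start j.+1 = (block_start j).+1 \/ block_start j = (block_start j.+1).+1.
Proof.
rewrite /block_start; case: (ltnP j.+1 q) => [lt_j1q | le_qj1].
  by rewrite (ltnW lt_j1q); left.
case: ltnP => [lt_jq | le_qj].
  by left; rewrite (_ : j.+1 - q = 0) /=; lia.
by rewrite subSn //=; case: odd => /=; lia.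
Qed.

Lemma block_start0 : block_start 0 = 0.
Proof. by rewrite /block_start q_gt0. Qed.

Lemma block_start_expn m : 0 < m -> block_start (q ^ m) = q.
Proof.
move=> m_gt0; have q_le : q <= q ^ m by rewrite -{1}(expn1 q) leq_pexp2l.
by rewrite /block_start ltnNge q_le oddB // oddX eqn0Ngt m_gt0 addbb subn0.
Qed.

Definition block_arc j := arc (block_start j) (block_start j.+1).

Lemma block_arcP j :
  [/\ perm_eq (block_arc j) torus, sorted lee_adj (block_arc j),
      head [::] (block_arc j) = cell (block_start j)
    & last [::] (block_arc j) = cell (block_start j.+1)].
Proof. exact: arcP (block_start_lt j) (block_start_lt j.+1) (block_start_step j). Qed.

Lemma block_arc_nonnil j : ~~ nilp (block_arc j).
Proof.
rewrite /nilp; case: (block_arcP j) => /perm_size-> _ _ _.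
by rewrite size_mkseq muln_eq0 negb_or -lt0n q_gt0.
Qed.

Definition block (P : seq (seq nat)) j := [seq nth [::] P j ++ c | c <- block_arc j].

Lemma block_ends P j :
  head [::] (block P j) = nth [::] P j ++ cell (block_start j)
  /\ last [::] (block P j) = nth [::] P j ++ cell (block_start j.+1).
Proof.
rewrite /block; case: (block_arcP j) (block_arc_nonnil j) => _ _.
by case: (block_arc j) => [|c cs] //= -> last_cs _; rewrite last_map last_cs.
Qed.

Lemma block_nonnil P j : ~~ nilp (block P j).
Proof. by rewrite /nilp size_map; apply: block_arc_nonnil. Qed.

Definition gray_step P := flatten (mkseq (block P) (size P)).

Lemma perm_gray_step P : perm_eq (gray_step P) [seq u ++ c | u <- P, c <- torus].
Proof.
rewrite -{2}(mkseq_nth [::] P) /gray_step /mkseq /block allpairs_mapl.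
by apply: perm_allpairs_dep => // j _; case: (block_arcP j).
Qed.

Lemma sorted_gray_step P : sorted lee_adj P -> sorted lee_adj (gray_step P).
Proof.
move=> P_sorted; apply: (@sorted_flatten _ [::]).
  apply/allP=> _ /mapP[j _ ->]; case: (block_arcP j) => _ arc_sorted _ _.
  rewrite sorted_map (sub_sorted _ arc_sorted) ?andbT => [|u v]; last exact: lee_adj_catl.
  exact: block_nonnil.
apply: (sorted_mkseq [::]) => j j1_lt.
have [_ ->] := block_ends P j; have [-> _] := block_ends P j.+1.
apply: lee_adj_catr; exact: (sortedP [::] P_sorted).
Qed.

Lemma head_gray_step P : ~~ nilp P -> head [::] (gray_step P) = head [::] P ++ [:: 0; 0].
Proof.
case: P => // u P _; have [hd _] := block_ends (u :: P) 0.
rewrite block_start0 cell0 /= in hd; rewrite /gray_step /mkseq /=.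
by case: (block _ 0) (block_nonnil (u :: P) 0) hd => //= w ws _ ->.
Qed.

Lemma last_gray_step P :
  ~~ nilp P -> last [::] (gray_step P) = last [::] P ++ cell (block_start (size P)).
Proof.
case/lastP: P => // P u _; have [_ lst] := block_ends (rcons P u) (size P).
rewrite nth_rcons ltnn eqxx in lst.
rewrite /gray_step size_rcons mkseqS flatten_rcons last_cat last_rcons.
by case: (block _ _) (block_nonnil (rcons P u) (size P)) lst.
Qed.

Definition twisted_gray m (P : seq (seq nat)) :=
  [/\ size P = q ^ m, uniq P, forall w, (w \in P) = is_word m w,
      sorted lee_adj P & last [::] P = map (shift 1) (head [::] P)].

Lemma twisted_gray_step m P : 0 < m -> twisted_gray m P -> twisted_gray m.+2 (gray_step P).
Proof.
move=> m_gt0 [size_P uniq_P mem_P sorted_P last_P].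
have P_nonnil : ~~ nilp P by rewrite /nilp size_P -lt0n expn_gt0 q_gt0.
have size_mem u : u \in P -> size u = m by rewrite mem_P => /andP[/eqP].
have perm := perm_gray_step P.
split.
- by rewrite (perm_size perm) size_allpairs size_P size_mkseq !expnSr mulnA.
- rewrite (perm_uniq perm) allpairs_uniq ?torus_uniq // => -[u c] [u' c'].
  case/allpairsP=> -[x y] /= [xP _ [-> ->]]; case/allpairsP=> -[x' y'] /= [x'P _ [-> ->]].
  by move/eqP; rewrite eqseq_cat ?size_mem ?size_mem // => /andP[/eqP-> /eqP->].
- move=> w; rewrite (perm_mem perm); apply/allpairsP/idP => [[[u c] /= [uP cT ->]] | w_word].
    by rewrite -addn2 is_word_cat ?size_mem // -mem_P uP -mem_torus.
  have size_take : size (take m w) = m.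
    by case/andP: w_word => /eqP size_w _; rewrite size_take size_w ltnS ltnW.
  move: w_word; rewrite -addn2 -{1}(cat_take_drop m w) is_word_cat // => /andP[wm w2].
  by exists (take m w, drop m w); rewrite /= mem_P mem_torus cat_take_drop.
- exact: sorted_gray_step.
- rewrite last_gray_step // head_gray_step // size_P block_start_expn // cell_q last_P.
  by rewrite map_cat /= /shift modn_small.
Qed.

Definition gray_base := mkseq (fun j => [:: shift (q - j) 0]) q.

Lemma twisted_gray_base : twisted_gray 1 gray_base.
Proof.
split.
- by rewrite size_mkseq expn1.
- apply/mkseq_uniqP/(can_in_inj (g := fun w => shift (q - head 0 w) 0)) => j j_lt /=.
  exact: shift_subK.
- move=> w; apply/mapP/idP => [[j _ ->] | ]; first by rewrite /is_word /= shift_lt.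
  case: w => [|x []] //; rewrite /is_word /= andbT => x_lt.
  by exists (shift (q - x) 0); rewrite ?shift_subK // mem_iota shift_lt.
- apply: (sorted_mkseq [::]) => j j1_lt.
  by rewrite lee_adj_cyc /cyc_adj !shiftD !addn1 subnSK ?eqxx ?orbT // ltnW.
- rewrite /gray_base -nth_last -nth0 size_mkseq !nth_mkseq ?prednK //= shiftD subn0.
  by rewrite (_ : q - q.-1 = 1) /shift ?add0n ?modnDl //; lia.
Qed.

Lemma twisted_gray_iter k : twisted_gray k.*2.+1 (iter k gray_step gray_base).
Proof.
elim: k => [|k IH]; first exact: twisted_gray_base.
by rewrite doubleS; apply: twisted_gray_step.
Qed.

Section QuasiComplementary.
Variables (m : nat) (P : seq (seq nat)).
Hypothesis gray_P : twisted_gray m P.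

Let Q := q ^ m.
Let Q_gt0 : 0 < Q. Proof. by rewrite expn_gt0 q_gt0. Qed.

Definition qcode i := map (shift (i %/ Q)) (rcons (nth [::] P (i %% Q)) 0).

Lemma nth_P_word r : r < Q -> is_word m (nth [::] P r).
Proof. by case: gray_P => size_P _ mem_P _ _ r_lt; rewrite -mem_P mem_nth ?size_P. Qed.

Lemma qcode_word i : is_word m.+1 (qcode i).
Proof.
case/andP: (nth_P_word (ltn_pmod i Q_gt0)) => /eqP size_r _.
by rewrite /is_word size_map size_rcons size_r eqxx; apply/allP=> _ /mapP[a _ ->]; apply: shift_lt.
Qed.

Lemma qcode_adj i : lee_adj (qcode i) (qcode i.+1).
Proof.
case: gray_P => size_P _ _ sorted_P last_P.
rewrite /qcode; set t := i %/ Q; set r := i %% Q.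
have -> : i.+1 = t * Q + r.+1 by rewrite addnS -divn_eq.
have r_lt : r < Q by apply: ltn_pmod.
have [r1_lt | r1_eq] : r.+1 < Q \/ r.+1 = Q by lia.
- rewrite divnMDl // modnMDl (divn_small r1_lt) (modn_small r1_lt) addn0.
  rewrite -!cats1; apply/lee_adj_shift/lee_adj_catr/(sortedP [::] sorted_P).
  by rewrite size_P.
- rewrite r1_eq -mulSnr mulnK // modnMl.
  have -> : nth [::] P r = map (shift 1) (nth [::] P 0).
    by rewrite nth0 -last_P -nth_last size_P -/Q -r1_eq.
  rewrite !map_rcons -map_comp (eq_map (shiftD t 1)) add1n -!cats1.
  by apply: lee_adj_catl; rewrite lee_adj_cyc /cyc_adj shiftD addn1 eqxx.
Qed.

Lemma qcode_shift i : qcode ((i + Q) %% q ^ m.+1) = map (shift 1) (qcode i).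
Proof.
have qQ : q ^ m.+1 = q * Q by rewrite expnS.
have r_eq : (i + Q) %% q ^ m.+1 %% Q = i %% Q.
  by rewrite qQ modn_dvdm ?dvdn_mull // modnDr.
have t_eq : (i + Q) %% q ^ m.+1 %/ Q %% q = (i %/ Q).+1 %% q.
  by rewrite qQ -modn_divl modn_mod divnDr // divnn Q_gt0 addn1.
rewrite /qcode r_eq -map_comp; apply: eq_map => a /=.
by rewrite shiftD -shift_modl t_eq shift_modl addn1.
Qed.

Lemma qcode_div i : i < q ^ m.+1 -> last 0 (qcode i) = i %/ Q.
Proof.
move=> i_lt; rewrite /qcode map_rcons last_rcons /shift add0n modn_small //.
by rewrite ltn_divLR // /Q -expnS.
Qed.

Lemma qcode_inj i j : i < q ^ m.+1 -> j < q ^ m.+1 -> qcode i = qcode j -> i = j.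
Proof.
case: gray_P => size_P uniq_P _ _ _ i_lt j_lt eq_ij.
have t_eq : i %/ Q = j %/ Q by rewrite -qcode_div // eq_ij qcode_div.
have t_lt : i %/ Q < q by rewrite ltn_divLR // /Q -expnS.
have word_r k : all (fun a => a < q) (rcons (nth [::] P (k %% Q)) 0).
  by rewrite all_rcons q_gt0; case/andP: (nth_P_word (ltn_pmod k Q_gt0)).
move: eq_ij; rewrite /qcode -t_eq => /(congr1 (map (shift (q - i %/ Q)))).
rewrite !map_shiftK ?subnKC 1?ltnW // => /rcons_inj[/eqP].
rewrite nth_uniq ?size_P ?ltn_pmod // => /eqP r_eq.
by rewrite (divn_eq i Q) (divn_eq j Q) t_eq r_eq.
Qed.

Lemma qcode_surj w : is_word m.+1 w -> exists2 i, i < q ^ m.+1 & qcode i = w.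
Proof.
case: gray_P => size_P _ mem_P _ _.
case/lastP: w => [|x t]; first by case/andP.
rewrite /is_word size_rcons eqSS all_rcons => /and3P[size_x t_lt x_lt].
set u := map (shift (q - t)) x.
have uP : u \in P.
  by rewrite mem_P /is_word size_map size_x; apply/allP=> _ /mapP[a _ ->]; apply: shift_lt.
have r_lt : index u P < Q by rewrite /Q -size_P index_mem.
exists (t * Q + index u P); first by rewrite expnSr -/Q; nia.
rewrite /qcode divnMDl // modnMDl divn_small // modn_small // addn0 nth_index //.
by rewrite map_rcons map_shiftK ?subnK 1?ltnW // /shift add0n modn_small.
Qed.

End QuasiComplementary.

Definition word_of_seq n (s : seq nat) : word q n :=
  [ffun j : 'I_n => Ordinal (ltn_pmod (nth 0 s j) q_gt0)].

Lemma word_of_seqE n s (j : 'I_n) :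
  all (fun a => a < q) s -> word_of_seq n s j = nth 0 s j :> nat.
Proof.
rewrite ffunE /= => /all_nthP s_lt; rewrite modn_small //.
by case: (ltnP j (size s)) => [/s_lt | /(nth_default 0) ->].
Qed.

Lemma lee_dist_word_of_seq n u v : is_word n u -> is_word n v -> lee_adj u v ->
  lee_dist (word_of_seq n u) (word_of_seq n v) = 1.
Proof.
move=> /andP[/eqP size_u u_lt] /andP[_ v_lt] uv; rewrite /lee_dist.
under eq_bigr do rewrite !word_of_seqE //.
by rewrite -size_u lee_adj_lee1.
Qed.

Lemma quasi_compl_lee_gray_of_seq n (F : nat -> seq nat) :
  (forall i, is_word n (F i)) ->
  (forall w, is_word n w -> exists2 i, i < q ^ n & F i = w) ->
  (forall i j, i < q ^ n -> j < q ^ n -> F i = F j -> i = j) ->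
  (forall i, lee_adj (F i) (F i.+1)) ->
  (forall i, F ((i + q ^ n.-1) %% q ^ n) = map (shift 1) (F i)) ->
  quasi_compl_lee_gray (fun i => word_of_seq n (F i)).
Proof.
move=> F_word F_surj F_inj F_adj F_shift.
have F_lt i : all (fun a => a < q) (F i) by case/andP: (F_word i).
have size_F i : size (F i) = n by case/andP: (F_word i) => /eqP.
split.
- move=> v; set s := [seq val (v j) | j <- enum 'I_n].
  have s_word : is_word n s.
    rewrite /is_word size_map size_enum_ord eqxx /=.
    by apply/allP=> _ /mapP[j _ ->]; apply: ltn_ord.
  have [i i_lt Fi] := F_surj s s_word; exists i => //; apply/ffunP=> j; apply: val_inj => /=.
  by rewrite word_of_seqE ?F_lt // Fi /s (nth_map j) ?size_enum_ord // nth_ord_enum.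
- move=> i j i_lt j_lt /= eq_ij; apply: F_inj => //; apply: (@eq_from_nth _ 0).
    by rewrite !size_F.
  move=> k; rewrite size_F => k_lt.
  by rewrite -!(word_of_seqE (Ordinal k_lt)) ?F_lt // eq_ij.
- by move=> i _; apply: lee_dist_word_of_seq.
- move=> i _ j; rewrite F_shift !word_of_seqE ?F_lt //; last by rewrite -F_shift.
  by rewrite (nth_map 0) ?size_F.
Qed.

End LeeGray.

Theorem corollary1 (q n : nat) :
  3 <= q -> 0 < n -> ~~ odd n ->
  exists G : nat -> word q n, quasi_compl_lee_gray G.
Proof.
move=> q_ge3 n_gt0 n_even; have q_gt1 : 1 < q by apply: ltnW.
have [k ->] : exists k, n = k.*2.+2.
  by exists n./2.-1; have := odd_double_half n; rewrite (negbTE n_even); lia.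
set P := iter k (gray_step q) (gray_base q).
have gray_P : twisted_gray q k.*2.+1 P by apply: twisted_gray_iter.
eexists; apply: (quasi_compl_lee_gray_of_seq q_gt1 (F := qcode q k.*2.+1 P)).
- exact: qcode_word.
- exact: qcode_surj.
- exact: qcode_inj.
- exact: qcode_adj.
- exact: qcode_shift.
Qed.
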